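(* Let $x_0 \in \mathbb R^{n_x}$ and $u_0 \in \mathbb R^{n_u} \times \{0,1\}^{m_u}$ with $(x_0,u_0) \in \mathcal D$, let $v_0 := V u_0$, let $e_0 \in \mathbb R^{n_x}$, and let $x_1 := A x_0 + B u_0 + e_0$. Let $\mathcal V_0 = [(\underline v_{t|0})_{t=0}^{T-1}, (\bar v_{t|0})_{t=0}^{T-1}]$ be an interval with $\underline v_{0|0} \le v_0 \le \bar v_{0|0}$, and let $\mathcal V_1 := [(\underline v_{1|0}, \ldots, \underline v_{T-1|0}, 0), (\bar v_{1|0}, \ldots, \bar v_{T-1|0}, 1)]$ (with $0,1 \in \mathbb R^{m_u}$ the all-zero and all-one vectors). Let $\{\lambda_{t|0}, \rho_{t|0}\}_{t=0}^{T}$ and $\{\mu_{t|0}, \underline\nu_{t|0}, \bar\nu_{t|0}, \sigma_{t|0}\}_{t=0}^{T-1}$ be feasible multipliers for $\mathbf D(\mathcal V_0; x_0)$ with dual objective value $\underline\theta_0(\mathcal V_0)$. Define $$\pi_1 := -|Q x_0|^2 - |R u_0|^2,\qquad \pi_2 := |\rho_{0|0}/2 - Q x_0|^2 + |\sigma_{0|0}/2 - R u_0|^2,$$ $$\pi_3 := (h - F x_0 - G u_0)'\mu_{0|0} + (v_0 - \underline v_{0|0})'\underline\nu_{0|0} + (\bar v_{0|0} - v_0)'\bar\nu_{0|0},\qquad \pi_4 := -e_0'\lambda_{1|0}.$$ Then $\underline\theta_1(\mathcal V_1) := \underline\theta_0(\mathcal V_0) + \sum_{i=1}^4 \pi_i$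 is a lower bound on $\theta(\mathcal V_1; x_1)$, the optimal value of $\mathbf P(\mathcal V_1; x_1)$.
   Context: Fix integers $n_x, n_u, m_u \ge 0$ and $T \ge 1$. Let $A \in \mathbb R^{n_x \times n_x}$, $B \in \mathbb R^{n_x \times (n_u+m_u)}$, and let $F, G, h$ define the polyhedron $\mathcal D = \{(x,u) \in \mathbb R^{n_x} \times \mathbb R^{n_u+m_u} : F x + G u \le h\}$, assumed to contain the origin. Input vectors $u \in \mathbb R^{n_u+m_u}$ have $n_u$ continuous entries and $m_u$ entries intended to be binary; $V \in \mathbb R^{m_u \times (n_u+m_u)}$ is the selection matrix extracting the latter. Let $Q$ (with $n_x$ columns) and $R$ (with $n_u+m_u$ columns) be weight matrices, possibly rank deficient. An interval is a set $\mathcal V = [(\underline v_t)_{t=0}^{T-1}, (\bar v_t)_{t=0}^{T-1}] \subset \mathbb R^{T m_u}$ with $\underline v_t, \bar v_t \in \{0,1\}^{m_u}$, $\underline v_t \le \bar v_t$. For an interval $\mathcal V$ and $\xi \in \mathbb R^{n_x}$, the QP $\mathbf P(\mathcal V; \xi)$ is: minimize $\sum_{t=0}^T |Q x_t|^2 + \sum_{t=0}^{T-1} |R u_t|^2$ over $x_0,\ldots,x_T \in \mathbb R^{n_x}$, $u_0, \ldots, u_{T-1} \in \mathbb R^{n_u+m_u}$ subject to $x_0 = \xi$, $x_{t+1} = A x_t + B u_t$, $(x_t, u_t) \in \mathcal D$, $\underline v_t \le V u_t \le \bar v_t$ ($t = 0, \ldots, T-1$); its optimal value is $\theta(\mathcal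 V;\xi) \in \mathbb R_{\ge 0} \cup \{\infty\}$ ($\infty$ if infeasible). Its dual $\mathbf D(\mathcal V; \xi)$ is: maximize $$-\sum_{t=0}^{T} |\rho_t/2|^2 - \sum_{t=0}^{T-1}\big(|\sigma_t/2|^2 + h'\mu_t + \bar v_t'\bar\nu_t - \underline v_t'\underline\nu_t\big) - \xi'\lambda_0$$ over $\{\lambda_t, \rho_t\}_{t=0}^T$, $\{\mu_t, \underline\nu_t, \bar\nu_t, \sigma_t\}_{t=0}^{T-1}$ subject to: $Q'\rho_t + \lambda_t - A'\lambda_{t+1} + F'\mu_t = 0$ ($t=0,\ldots,T-1$); $Q'\rho_T + \lambda_T = 0$; $R'\sigma_t - B'\lambda_{t+1} + G'\mu_t + V'(\bar\nu_t - \underline\nu_t) = 0$ ($t = 0, \ldots, T-1$); $(\mu_t, \underline\nu_t, \bar\nu_t) \ge 0$. The dual objective value of a feasible point is the value of this objective at it. $|\cdot|$ is the Euclidean norm, $'$ the transpose. *)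

From HB Require Import structures.
From mathcomp Require Import all_boot all_order all_algebra.
From mathcomp Require Import all_classical all_reals all_analysis.
Set Implicit Arguments. Unset Strict Implicit. Unset Printing Implicit Defensive.
Import Order.TTheory GRing.Theory Num.Theory.
Local Open Scope ring_scope.
Local Open Scope classical_set_scope.

Section Defs.
Variable R : realType.

Definition sqnorm n (v : 'cV[R]_n) : R := \sum_(i < n) (v i 0) ^+ 2.
Definition dotp n (u v : 'cV[R]_n) : R := \sum_(i < n) u i 0 * v i 0.

Definition mxle m n (M N : 'M[R]_(m, n)) : Prop := forall i j, M i j <= N i j.

Definition selV nu mu : 'M[R]_(mu, nu + mu) := row_mx (0 : 'M[R]_(mu, nu)) 1%:M.

Definition zerov m : 'cV[R]_m := const_mx 0.
Definition onev m : 'cV[R]_m := const_mx 1.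

Definition is_binary m (v : 'cV[R]_m) : Prop := forall i, v i 0 = 0 \/ v i 0 = 1.

Definition is_bin_interval mu (T : nat) (vlo vhi : nat -> 'cV[R]_mu) : Prop :=
  forall t, (t < T)%N -> [/\ is_binary (vlo t), is_binary (vhi t) & mxle (vlo t) (vhi t)].

Definition primal_feasible nx nu mu p (T : nat)
  (A : 'M[R]_nx) (B : 'M[R]_(nx, nu + mu)) (F : 'M[R]_(p, nx))
  (G : 'M[R]_(p, nu + mu)) (h : 'cV[R]_p)
  (vlo vhi : nat -> 'cV[R]_mu) (xi : 'cV[R]_nx)
  (x : nat -> 'cV[R]_nx) (u : nat -> 'cV[R]_(nu + mu)) : Prop :=
  x 0%N = xi /\
  forall t, (t < T)%N ->
    [/\ x t.+1 = A *m x t + B *m u t,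
        mxle (F *m x t + G *m u t) h,
        mxle (vlo t) (selV nu mu *m u t) &
        mxle (selV nu mu *m u t) (vhi t)].

Definition primal_cost nx nu mu q r (T : nat) (Q : 'M[R]_(q, nx))
  (Rw : 'M[R]_(r, nu + mu))
  (x : nat -> 'cV[R]_nx) (u : nat -> 'cV[R]_(nu + mu)) : R :=
  \sum_(t < T.+1) sqnorm (Q *m x t) + \sum_(t < T) sqnorm (Rw *m u t).

(* theta(V; xi): infimum of the cost over feasible points (+oo if infeasible) *)
Definition thetaP nx nu mu p q r (T : nat)
  (A : 'M[R]_nx) (B : 'M[R]_(nx, nu + mu)) (F : 'M[R]_(p, nx))
  (G : 'M[R]_(p, nu + mu)) (h : 'cV[R]_p) (Q : 'M[R]_(q, nx))
  (Rw : 'M[R]_(r, nu + mu))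
  (vlo vhi : nat -> 'cV[R]_mu) (xi : 'cV[R]_nx) : \bar R :=
  ereal_inf [set c | exists x u,
     primal_feasible T A B F G h vlo vhi xi x u /\
     c = (primal_cost T Q Rw x u)%:E].

Definition dual_feasible nx nu mu p q r (T : nat)
  (A : 'M[R]_nx) (B : 'M[R]_(nx, nu + mu)) (F : 'M[R]_(p, nx))
  (G : 'M[R]_(p, nu + mu)) (Q : 'M[R]_(q, nx)) (Rw : 'M[R]_(r, nu + mu))
  (lam : nat -> 'cV[R]_nx) (rho : nat -> 'cV[R]_q)
  (mu_ : nat -> 'cV[R]_p) (nulo nuhi : nat -> 'cV[R]_mu)
  (sig : nat -> 'cV[R]_r) : Prop :=
  (forall t, (t < T)%N ->
     [/\ Q^T *m rho t + lam t - A^T *m lam t.+1 + F^T *m mu_ t = 0,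
         Rw^T *m sig t - B^T *m lam t.+1 + G^T *m mu_ t
           + (selV nu mu)^T *m (nuhi t - nulo t) = 0,
         mxle 0 (mu_ t), mxle 0 (nulo t) & mxle 0 (nuhi t)]) /\
  Q^T *m rho T + lam T = 0.

Definition dual_objective nx mu p q r (T : nat) (h : 'cV[R]_p)
  (vlo vhi : nat -> 'cV[R]_mu) (xi : 'cV[R]_nx)
  (lam : nat -> 'cV[R]_nx) (rho : nat -> 'cV[R]_q)
  (mu_ : nat -> 'cV[R]_p) (nulo nuhi : nat -> 'cV[R]_mu)
  (sig : nat -> 'cV[R]_r) : R :=
  - (\sum_(t < T.+1) sqnorm ((2%:R)^-1 *: rho t))
  - (\sum_(t < T) (sqnorm ((2%:R)^-1 *: sig t) + dotp h (mu_ t)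
                   + dotp (vhi t) (nuhi t) - dotp (vlo t) (nulo t)))
  - dotp xi (lam 0%N).

Definition shift_lo mu (T : nat) (vlo : nat -> 'cV[R]_mu) (t : nat) : 'cV[R]_mu :=
  if (t.+1 < T)%N then vlo t.+1 else zerov mu.
Definition shift_hi mu (T : nat) (vhi : nat -> 'cV[R]_mu) (t : nat) : 'cV[R]_mu :=
  if (t.+1 < T)%N then vhi t.+1 else onev mu.

End Defs.

Arguments selV {R} nu mu.
Arguments zerov {R} m.
Arguments onev {R} m.

(** The shifted multipliers [(lam_{t+1|0}, rho_{t+1|0}, ...)], padded with zeros at the
    end of the horizon, are feasible for the dual of the shifted problem, so by weak
    duality their dual objective at [x_1] bounds [theta(V_1; x_1)] from below.  That
    objective differs from [theta_0(V_0)] by the stage-0 terms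
    [|rho_0/2|^2 + |sigma_0/2|^2 + h'mu_0 + vhi_0'nuhi_0 - vlo_0'nulo_0 + x_0'lam_0 - x_1'lam_1];
    eliminating [x_0'lam_0 - x_1'lam_1] with the stage-0 stationarity conditions,
    contracted against [x_0] and [u_0], turns them into exactly [pi_1 + ... + pi_4]. *)
From HB Require Import structures.
From mathcomp Require Import all_boot all_order all_algebra.
From mathcomp Require Import all_classical all_reals all_analysis.
From mathcomp Require Import lra.
Import Order.TTheory GRing.Theory Num.Theory.
Local Open Scope ring_scope.
Set Implicit Arguments. Unset Strict Implicit.

Section InnerProduct.
Variable R : realType.
Implicit Types (n k : nat) (a : R).

Lemma dotpE n (u v : 'cV[R]_n) : dotp u v = (u^T *m v) 0 0.
Proof. by rewrite /dotp mxE; apply: eq_bigr => i _; rewrite mxE. Qed.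

Lemma dotpC n (u v : 'cV[R]_n) : dotp u v = dotp v u.
Proof. by apply: eq_bigr => i _; rewrite mulrC. Qed.

Lemma dotp_trmx n k (M : 'M[R]_(k, n)) (u : 'cV[R]_n) (v : 'cV[R]_k) :
  dotp u (M^T *m v) = dotp (M *m u) v.
Proof. by rewrite !dotpE trmx_mul mulmxA. Qed.

Lemma dotpDl n (u w v : 'cV[R]_n) : dotp (u + w) v = dotp u v + dotp w v.
Proof. by rewrite /dotp -big_split; apply: eq_bigr => i _; rewrite mxE mulrDl. Qed.

Lemma dotpNl n (u v : 'cV[R]_n) : dotp (- u) v = - dotp u v.
Proof. by rewrite /dotp -sumrN; apply: eq_bigr => i _; rewrite mxE mulNr. Qed.

Lemma dotpBl n (u w v : 'cV[R]_n) : dotp (u - w) v = dotp u v - dotp w v.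
Proof. by rewrite dotpDl dotpNl. Qed.

Lemma dotpDr n (u w v : 'cV[R]_n) : dotp v (u + w) = dotp v u + dotp v w.
Proof. by rewrite dotpC dotpDl !(dotpC v). Qed.

Lemma dotpNr n (u v : 'cV[R]_n) : dotp v (- u) = - dotp v u.
Proof. by rewrite dotpC dotpNl dotpC. Qed.

Lemma dotpBr n (u w v : 'cV[R]_n) : dotp v (u - w) = dotp v u - dotp v w.
Proof. by rewrite dotpDr dotpNr. Qed.

Lemma dotpZl n a (u v : 'cV[R]_n) : dotp (a *: u) v = a * dotp u v.
Proof. by rewrite /dotp mulr_sumr; apply: eq_bigr => i _; rewrite mxE mulrA. Qed.

Lemma dotp0r n (u : 'cV[R]_n) : dotp u 0 = 0.
Proof. by rewrite /dotp big1 // => i _; rewrite mxE mulr0. Qed.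

Lemma sqnorm_dotp n (u : 'cV[R]_n) : sqnorm u = dotp u u.
Proof. by apply: eq_bigr => i _; rewrite expr2. Qed.

Lemma sqnorm_ge0 n (u : 'cV[R]_n) : 0 <= sqnorm u.
Proof. by apply: sumr_ge0 => i _; apply: sqr_ge0. Qed.

Lemma sqnorm0 n : sqnorm (0 : 'cV[R]_n) = 0.
Proof. by rewrite sqnorm_dotp dotp0r. Qed.

Lemma sqnorm_halfB n (a b : 'cV[R]_n) :
  sqnorm ((2%:R)^-1 *: b - a) = sqnorm ((2%:R)^-1 *: b) - dotp a b + sqnorm a.
Proof.
rewrite !sqnorm_dotp !(dotpBl, dotpBr) (dotpC a (_ *: b)) !dotpZl (dotpC b a); lra.
Qed.

Lemma dotp_le_sqnorm n (a b : 'cV[R]_n) :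
  dotp a b <= sqnorm a + sqnorm ((2%:R)^-1 *: b).
Proof. by have := sqnorm_ge0 ((2%:R)^-1 *: b - a); rewrite sqnorm_halfB; lra. Qed.

Lemma sumr_shift_pad0 n (f g : nat -> R) :
  (forall t, (t < n)%N -> f t = g t.+1) -> f n = 0 ->
  \sum_(t < n.+1) f t = \sum_(t < n.+1) g t - g 0%N.
Proof.
move=> fE fn0; rewrite big_ord_recr big_ord_recl /= fn0 addr0 addrC addKr.
by apply: eq_bigr => t _; rewrite fE.
Qed.

Lemma dotp_ler n (u w v : 'cV[R]_n) : mxle u w -> mxle 0 v -> dotp u v <= dotp w v.
Proof.
move=> le_uw v_ge0; apply: ler_sum => i _; apply: ler_wpM2r (le_uw i 0).
by have := v_ge0 i 0; rewrite mxE.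
Qed.

End InnerProduct.

Section Duality.
Variables (R : realType) (nx nu mu p q r : nat).
Variables (A : 'M[R]_nx) (B : 'M[R]_(nx, nu + mu)) (F : 'M[R]_(p, nx)).
Variables (G : 'M[R]_(p, nu + mu)) (h : 'cV[R]_p).
Variables (Q : 'M[R]_(q, nx)) (Rw : 'M[R]_(r, nu + mu)).
Local Notation V := (selV nu mu).
Local Notation half v := ((2%:R)^-1 *: v).

Definition shift_trunc k n (f : nat -> 'cV[R]_k) t : 'cV[R]_k :=
  if (t < n)%N then f t.+1 else 0.

Lemma dual_stage_identity x u e lam lam' rho (m : 'cV[R]_p) nulo nuhi sig :
  Q^T *m rho + lam - A^T *m lam' + F^T *m m = 0 ->
  Rw^T *m sig - B^T *m lam' + G^T *m m + V^T *m (nuhi - nulo) = 0 ->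
  dotp (A *m x + B *m u + e) lam' - dotp x lam =
    dotp (Q *m x) rho + dotp (Rw *m u) sig + dotp (F *m x + G *m u) m
    + dotp (V *m u) (nuhi - nulo) + dotp e lam'.
Proof.
move=> /(congr1 (dotp x)) stat_x /(congr1 (dotp u)) stat_u.
rewrite !(dotp0r, dotpDr, dotpNr, dotp_trmx) in stat_x stat_u.
rewrite !dotpDl dotpBr; lra.
Qed.

Lemma dual_stage_le x u lam lam' rho (m : 'cV[R]_p) nulo nuhi sig vlo vhi :
  Q^T *m rho + lam - A^T *m lam' + F^T *m m = 0 ->
  Rw^T *m sig - B^T *m lam' + G^T *m m + V^T *m (nuhi - nulo) = 0 ->
  mxle 0 m -> mxle 0 nulo -> mxle 0 nuhi ->
  mxle (F *m x + G *m u) h -> mxle vlo (V *m u) -> mxle (V *m u) vhi ->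
  dotp (A *m x + B *m u) lam' - dotp x lam <=
    sqnorm (Q *m x) + sqnorm (half rho) + sqnorm (Rw *m u) + sqnorm (half sig)
    + dotp h m + dotp vhi nuhi - dotp vlo nulo.
Proof.
move=> stat_x stat_u m_ge0 nulo_ge0 nuhi_ge0 Dxu lo_u u_hi.
rewrite -[A *m x + B *m u]addr0 (dual_stage_identity _ _ _ stat_x stat_u).
have := dotp_le_sqnorm (Q *m x) rho; have := dotp_le_sqnorm (Rw *m u) sig.
have := dotp_ler Dxu m_ge0; have := dotp_ler lo_u nulo_ge0.
have := dotp_ler u_hi nuhi_ge0.
rewrite dotpBr [dotp 0 _]dotpC dotp0r; lra.
Qed.

Lemma dual_terminal_le x lam rho :
  Q^T *m rho + lam = 0 -> - dotp x lam <= sqnorm (Q *m x) + sqnorm (half rho).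
Proof.
move=> /(congr1 (dotp x)); rewrite dotp0r dotpDr dotp_trmx => stat_x.
by have := dotp_le_sqnorm (Q *m x) rho; lra.
Qed.

Lemma weak_duality T vlo vhi xi x u lam rho m nulo nuhi sig :
  dual_feasible T A B F G Q Rw lam rho m nulo nuhi sig ->
  primal_feasible T A B F G h vlo vhi xi x u ->
  dual_objective T h vlo vhi xi lam rho m nulo nuhi sig <= primal_cost T Q Rw x u.
Proof.
move=> [dual_stage dual_T] [x0 primal_stage].
pose g t := dotp (x t) (lam t).
have stage_le (t : 'I_T) : g t.+1 - g t <=
    sqnorm (Q *m x t) + sqnorm (half (rho t)) + sqnorm (Rw *m u t)
    + sqnorm (half (sig t)) + dotp h (m t) + dotp (vhi t) (nuhi t)
    - dotp (vlo t) (nulo t).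
  have [stat_x stat_u m_ge0 nulo_ge0 nuhi_ge0] := dual_stage t (ltn_ord t).
  have [xS Dxu lo_u u_hi] := primal_stage t (ltn_ord t).
  by rewrite /g xS; apply: dual_stage_le.
have telescope : \sum_(t < T) (g t.+1 - g t) = g T - g 0%N.
  by rewrite -(big_mkord xpredT (fun t => g t.+1 - g t)) telescope_sumr.
have := ler_sum (index_enum 'I_T) (P := xpredT) (fun t _ => stage_le t).
rewrite telescope.
have := dual_terminal_le (x T) dual_T.
rewrite /dual_objective /primal_cost /g -x0 !big_ord_recr /= !big_split /= !sumrN.
lra.
Qed.

Lemma dual_feasible_shift T lam rho m nulo nuhi sig :
  dual_feasible T.+1 A B F G Q Rw lam rho m nulo nuhi sig ->
  dual_feasible T.+1 A B F G Q Rw (shift_trunc T.+1 lam) (shift_trunc T.+1 rho)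
    (shift_trunc T m) (shift_trunc T nulo) (shift_trunc T nuhi) (shift_trunc T sig).
Proof.
move=> [dual_stage dual_T]; split; last by rewrite /shift_trunc !ltnn mulmx0 addr0.
move=> t t_le_T; rewrite /shift_trunc t_le_T ltnS.
case: ltnP => [t_lt_T | T_le_t]; first exact: dual_stage.
have -> : t = T by apply/eqP; rewrite eqn_leq -ltnS t_le_T.
rewrite !(mulmx0, subrr, subr0, addr0); split=> // i j; by rewrite lexx.
Qed.

Lemma dual_objective_shift (x0 x1 : 'cV[R]_nx) T (vlo vhi : nat -> 'cV[R]_mu)
    lam (rho : nat -> 'cV[R]_q) (m : nat -> 'cV[R]_p) nulo nuhi
    (sig : nat -> 'cV[R]_r) :
  dual_objective T.+1 h (shift_lo T.+1 vlo) (shift_hi T.+1 vhi) x1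
    (shift_trunc T.+1 lam) (shift_trunc T.+1 rho) (shift_trunc T m)
    (shift_trunc T nulo) (shift_trunc T nuhi) (shift_trunc T sig) =
  dual_objective T.+1 h vlo vhi x0 lam rho m nulo nuhi sig
  + sqnorm (half (rho 0%N)) + sqnorm (half (sig 0%N)) + dotp h (m 0%N)
  + dotp (vhi 0%N) (nuhi 0%N) - dotp (vlo 0%N) (nulo 0%N)
  + dotp x0 (lam 0%N) - dotp x1 (lam 1%N).
Proof.
pose rho_term (rho : nat -> 'cV[R]_q) t := sqnorm (half (rho t)).
pose stage_term (vlo vhi nulo nuhi : nat -> 'cV[R]_mu) (m : nat -> 'cV[R]_p)
    (sig : nat -> 'cV[R]_r) t :=
  sqnorm (half (sig t)) + dotp h (m t) + dotp (vhi t) (nuhi t) - dotp (vlo t) (nulo t).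
rewrite /dual_objective.
rewrite (sumr_shift_pad0 (f := rho_term (shift_trunc T.+1 rho)) (g := rho_term rho)).
- rewrite (sumr_shift_pad0 (f := stage_term (shift_lo T.+1 vlo) (shift_hi T.+1 vhi)
      (shift_trunc T nulo) (shift_trunc T nuhi) (shift_trunc T m) (shift_trunc T sig))
    (g := stage_term vlo vhi nulo nuhi m sig)).
  + by rewrite /shift_trunc /rho_term /stage_term /=; lra.
  + by move=> t t_lt_T; rewrite /stage_term /shift_trunc /shift_lo /shift_hi !ltnS t_lt_T.
  + by rewrite /stage_term /shift_trunc ltnn scaler0 sqnorm0 !dotp0r; lra.
- by move=> t t_le_T; rewrite /rho_term /shift_trunc t_le_T.
- by rewrite /rho_term /shift_trunc ltnn scaler0 sqnorm0.
Qed.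

End Duality.

Theorem theorem1 (R : realType) (nx nu mu p q r T : nat) (hT : (1 <= T)%N)
  (A : 'M[R]_nx) (B : 'M[R]_(nx, nu + mu)) (F : 'M[R]_(p, nx))
  (G : 'M[R]_(p, nu + mu)) (h : 'cV[R]_p) (Q : 'M[R]_(q, nx))
  (Rw : 'M[R]_(r, nu + mu))
  (hD0 : mxle (F *m (0 : 'cV[R]_nx) + G *m (0 : 'cV[R]_(nu + mu))) h)
  (x0 : 'cV[R]_nx) (u0 : 'cV[R]_(nu + mu))
  (hu0 : is_binary (selV nu mu *m u0))
  (hxu0 : mxle (F *m x0 + G *m u0) h)
  (e0 : 'cV[R]_nx)
  (vlo vhi : nat -> 'cV[R]_mu)
  (hV0 : is_bin_interval T vlo vhi)
  (hv0lo : mxle (vlo 0%N) (selV nu mu *m u0))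
  (hv0hi : mxle (selV nu mu *m u0) (vhi 0%N))
  (lam : nat -> 'cV[R]_nx) (rho : nat -> 'cV[R]_q)
  (mu_ : nat -> 'cV[R]_p) (nulo nuhi : nat -> 'cV[R]_mu)
  (sig : nat -> 'cV[R]_r)
  (hdual : dual_feasible T A B F G Q Rw lam rho mu_ nulo nuhi sig) :
  let v0 := selV nu mu *m u0 in
  let x1 := A *m x0 + B *m u0 + e0 in
  let theta0 := dual_objective T h vlo vhi x0 lam rho mu_ nulo nuhi sig in
  let pi1 := - sqnorm (Q *m x0) - sqnorm (Rw *m u0) in
  let pi2 := sqnorm ((2%:R)^-1 *: rho 0%N - Q *m x0)
             + sqnorm ((2%:R)^-1 *: sig 0%N - Rw *m u0) in
  let pi3 := dotp (h - F *m x0 - G *m u0) (mu_ 0%N)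
             + dotp (v0 - vlo 0%N) (nulo 0%N)
             + dotp (vhi 0%N - v0) (nuhi 0%N) in
  let pi4 := - dotp e0 (lam 1%N) in
  ((theta0 + pi1 + pi2 + pi3 + pi4)%:E <=
     thetaP T A B F G h Q Rw (shift_lo T vlo) (shift_hi T vhi) x1)%E.
Proof.
case: T hT hV0 hdual => // T _ _ hdual; cbv zeta.
apply/ereal_infP => _ [x [u [primal ->]]]; rewrite lee_fin.
apply: le_trans (weak_duality (dual_feasible_shift hdual) primal).
rewrite (dual_objective_shift _ x0).
have [stat_x stat_u _ _ _] := hdual.1 0%N isT.
have := dual_stage_identity x0 u0 e0 stat_x stat_u.
rewrite !sqnorm_halfB !(dotpDl, dotpNl, dotpBr); lra.
Qed.
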